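(* Fix $2\le d\le 7$ and let $(a,b,c)$ be given by: $d=2$: $(0.5,0.7,0.27)$; $d=3$: $(0.4,0.6,0.2)$; $d=4$: $(0.3,0.5,0.1)$; $d=5$: $(0.3,0.4,0.1)$; $d=6$: $(0.27,0.32,0.1)$; $d=7$: $(0.26,0.27,0.01)$. Then $\|D\psi_x\|<0.99$ for all $x\in\mathcal{S}_{a,b,c}$.
   Context: $\psi$ acts on sequences $x=(x_n)_{n\ge1}$ with nonnegative entries by $\psi(x)_1=\big(\frac{1+x_1+x_1x_2}{1+2x_1}\big)^d$ and $\psi(x)_n=x_{n-1}^d\big(\frac{1+x_n+x_nx_{n+1}}{1+x_{n-1}+x_{n-1}x_n}\big)^d$ for $n\ge2$; here it is restricted to $\mathcal{R}$, the set of sequences of the form $x_i=z_i/z_{i-1}$ ($x_i=0$ if $z_{i-1}=0$), $i\ge1$, for $z$ a symmetric probability distribution on $\mathbb{Z}$ whose support is an interval or all of $\mathbb{Z}$. $\mathcal{S}_{a,b,c}:=\{x\in\mathcal{R}: a\le x_1\le b,\ 0\le x_n\le c\ \forall n\ge2\}$. $D\psi_x$ is the linear operator $(D\psi_x y)_i=\sum_{j\ge1}\frac{\partial\psi_i}{\partial x_j}(x)\,y_j$ (only $|i-j|\le1$ terms are nonzero). Sequences are normed by $\|y\|=\sup_{i\ge1}|y_i|$ if $d=2$ and $\|y\|=|y_1|+\sup_{i\ge2}|y_i|$ if $3\le d\le7$, and $\|D\psi_x\|=\sup_{\|y\|=1}\|D\psi_xy\|$ is the operator norm. *)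

From Stdlib Require Import Reals ZArith Lra.
From Coquelicot Require Import Coquelicot.
Open Scope R_scope.

(* Sequences x = (x_n)_{n>=1} are represented as nat -> R; index 0 is unused. *)

Definition sym_prob_interval (z : Z -> R) : Prop :=
  (forall k, 0 <= z k) /\
  (forall k, z (- k)%Z = z k) /\
  (exists s1 s2 : R,
      is_series (fun n : nat => z (Z.of_nat n)) s1 /\
      is_series (fun n : nat => z (- (Z.of_nat n + 1))%Z) s2 /\
      s1 + s2 = 1) /\
  (forall a b c : Z, (a < b < c)%Z -> 0 < z a -> 0 < z c -> 0 < z b).

Definition in_calR (x : nat -> R) : Prop :=
  exists z : Z -> R, sym_prob_interval z /\
    forall i : nat, (1 <= i)%nat ->
      x i = (if Req_EM_T (z (Z.of_nat i - 1)%Z) 0 then 0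
             else z (Z.of_nat i) / z (Z.of_nat i - 1)%Z).

Definition in_S (a b c : R) (x : nat -> R) : Prop :=
  in_calR x /\ a <= x 1%nat <= b /\
  (forall n : nat, (2 <= n)%nat -> 0 <= x n <= c).

Definition psi (d : nat) (x : nat -> R) (n : nat) : R :=
  match n with
  | O => 0
  | S O => ((1 + x 1%nat + x 1%nat * x 2%nat) / (1 + 2 * x 1%nat)) ^ d
  | S m => (x m) ^ d *
           ((1 + x n + x n * x (S n)) / (1 + x m + x m * x n)) ^ d
  end.

Definition upd (x : nat -> R) (j : nat) (t : R) : nat -> R :=
  fun k => if Nat.eqb k j then t else x k.

Definition dpsi (d : nat) (x : nat -> R) (i j : nat) : R :=
  Derive (fun t => psi d (upd x j t) i) (x j).

(* (D psi_x y)_i = sum_{j>=1} d psi_i/d x_j (x) y_j ; only |i-j|<=1 terms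
   can be nonzero, so the sum is written over j in {i-1,i,i+1}, j >= 1. *)
Definition Dpsi (d : nat) (x y : nat -> R) (i : nat) : R :=
  (if (2 <=? i)%nat then dpsi d x i (i - 1) * y (i - 1)%nat else 0)
  + dpsi d x i i * y i + dpsi d x i (S i) * y (S i).

Definition sup_from (k : nat) (y : nat -> R) : Rbar :=
  Lub_Rbar (fun v => exists i : nat, (k <= i)%nat /\ v = Rabs (y i)).

Definition seqnorm (d : nat) (y : nat -> R) : Rbar :=
  if Nat.eqb d 2 then sup_from 1 y
  else Rbar_plus (Finite (Rabs (y 1%nat))) (sup_from 2 y).

Definition abc (d : nat) : R * R * R :=
  match d return R * R * R with
  | 2%nat => (5/10, 7/10, 27/100)
  | 3%nat => (4/10, 6/10, 2/10)
  | 4%nat => (3/10, 5/10, 1/10)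
  | 5%nat => (3/10, 4/10, 1/10)
  | 6%nat => (27/100, 32/100, 1/10)
  | _ => (26/100, 27/100, 1/100)
  end.

(* D psi_x is tridiagonal.  With L(u, v) = 1 + u + u v one has psi_1 = (L(x_1, x_2) / (1 + 2 x_1))^d
   and psi_n = (x_{n-1} L(x_n, x_{n+1}) / L(x_{n-1}, x_n))^d for n >= 2, so every nonzero entry
   has the form d g^(d-1) w with explicit g and w.  Over a box of coordinates, g and w are bounded
   by taking numerators at the upper and denominators at the lower corner; the only negative
   entry is d psi_1 / d x_1, whose sign is that of x_2 - 1.
   For d = 2 the operator norm is at most the largest absolute row sum.  For d >= 3, with
   ||y|| = |y_1| + sup_{i>=2} |y_i|, the coefficient of |y_1| is the first column (rows 1 and 2)
   and the coefficient of the tail is d psi_1 / d x_2 plus a row sum.  After a few bisections of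
   [a,b] x [0,c]^2 and [0,c]^3 all these sums are below 0.989. *)

From Stdlib Require Import Reals Lra Lia.
From Coquelicot Require Import Coquelicot.
Open Scope R_scope.

Definition ell (u v : R) : R := 1 + u + u * v.

Definition ratio1 (x1 x2 : R) : R := ell x1 x2 / (1 + 2 * x1).

Definition ratio (p q r : R) : R := p * (ell q r / ell p q).

Definition dpow (d : nat) (g : R) : R := INR d * g ^ (d - 1).

Definition d11 (d : nat) (x1 x2 : R) : R := dpow d (ratio1 x1 x2) * ((x2 - 1) / (1 + 2 * x1) ^ 2).
Definition d12 (d : nat) (x1 x2 : R) : R := dpow d (ratio1 x1 x2) * (x1 / (1 + 2 * x1)).

(* Entries of row n >= 2 at (p, q, r) = (x_{n-1}, x_n, x_{n+1}). *)
Definition dprev (d : nat) (p q r : R) : R := dpow d (ratio p q r) * (ell q r / ell p q ^ 2).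
Definition ddiag (d : nat) (p q r : R) : R :=
  dpow d (ratio p q r) * (p * (1 + r + p * r) / ell p q ^ 2).
Definition dnext (d : nat) (p q r : R) : R := dpow d (ratio p q r) * (p * q / ell p q).

Lemma is_derive_pow_comp (f : R -> R) d x l : (1 <= d)%nat ->
  is_derive f x l -> is_derive (fun t => f t ^ d) x (dpow d (f x) * l).
Proof.
  intros Hd Hf. replace (dpow d (f x) * l) with (INR d * l * f x ^ Nat.pred d).
  - exact (is_derive_pow f d x l Hf).
  - unfold dpow. replace (d - 1)%nat with (Nat.pred d) by lia. ring.
Qed.

Lemma ell_pos u v : 0 <= u -> 0 <= v -> 0 < ell u v.
Proof. intros. unfold ell. nra. Qed.

Lemma is_derive_ratio1_1 x1 x2 : 0 <= x1 ->
  is_derive (fun t => ratio1 t x2) x1 ((x2 - 1) / (1 + 2 * x1) ^ 2).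
Proof. intros. unfold ratio1, ell. auto_derive; [lra | field; lra]. Qed.

Lemma is_derive_ratio1_2 x1 x2 : 0 <= x1 ->
  is_derive (fun t => ratio1 x1 t) x2 (x1 / (1 + 2 * x1)).
Proof. intros. unfold ratio1, ell. auto_derive; [lra | field; lra]. Qed.

Lemma is_derive_ratio_1 p q r : 0 <= p -> 0 <= q ->
  is_derive (fun t => ratio t q r) p (ell q r / ell p q ^ 2).
Proof.
  intros. pose proof (ell_pos p q). unfold ratio, ell in *.
  auto_derive; [lra | field; lra].
Qed.

Lemma is_derive_ratio_2 p q r : 0 <= p -> 0 <= q ->
  is_derive (fun t => ratio p t r) q (p * (1 + r + p * r) / ell p q ^ 2).
Proof.
  intros. pose proof (ell_pos p q). unfold ratio, ell in *.
  auto_derive; [lra | field; lra].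
Qed.

Lemma is_derive_ratio_3 p q r : 0 <= p -> 0 <= q ->
  is_derive (fun t => ratio p q t) r (p * q / ell p q).
Proof.
  intros. pose proof (ell_pos p q). unfold ratio, ell in *.
  auto_derive; [lra | field; lra].
Qed.

Lemma psi_SS d x m :
  psi d x (S (S m)) = ratio (x (S m)) (x (S (S m))) (x (S (S (S m)))) ^ d.
Proof. unfold psi, ratio, ell. rewrite Rpow_mult_distr. reflexivity. Qed.

Lemma upd_eq x j t : upd x j t j = t.
Proof. unfold upd. now rewrite Nat.eqb_refl. Qed.

Lemma upd_neq x j t k : k <> j -> upd x j t k = x k.
Proof. intros H. unfold upd. now rewrite (proj2 (Nat.eqb_neq k j) H). Qed.

Lemma dpsi_chain d x i j (f : R -> R) l : (1 <= d)%nat ->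
  (forall t, psi d (upd x j t) i = f t ^ d) -> is_derive f (x j) l ->
  dpsi d x i j = dpow d (f (x j)) * l.
Proof.
  intros Hd Hpsi Hf. apply is_derive_unique.
  apply (is_derive_ext (fun t => f t ^ d)); [intros; now rewrite Hpsi|].
  now apply is_derive_pow_comp.
Qed.

Section Partials.
Variables (d : nat) (x : nat -> R).
Hypothesis (Hd : (1 <= d)%nat).

Lemma dpsi_1_1 : 0 <= x 1%nat -> dpsi d x 1 1 = d11 d (x 1%nat) (x 2%nat).
Proof.
  intros. apply (dpsi_chain _ _ _ _ (fun t => ratio1 t (x 2%nat)));
    [exact Hd | intros t; reflexivity | now apply is_derive_ratio1_1].
Qed.

Lemma dpsi_1_2 : 0 <= x 1%nat -> dpsi d x 1 2 = d12 d (x 1%nat) (x 2%nat).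
Proof.
  intros. apply (dpsi_chain _ _ _ _ (fun t => ratio1 (x 1%nat) t));
    [exact Hd | intros t; reflexivity | now apply is_derive_ratio1_2].
Qed.

Variable m : nat.
Let p := x (S m).
Let q := x (S (S m)).
Let r := x (S (S (S m))).
Hypotheses (Hp : 0 <= p) (Hq : 0 <= q).

Lemma dpsi_prev : dpsi d x (S (S m)) (S m) = dprev d p q r.
Proof.
  apply (dpsi_chain _ _ _ _ (fun t => ratio t q r)); [exact Hd | | now apply is_derive_ratio_1].
  intros t. rewrite psi_SS, upd_eq, !upd_neq by lia. reflexivity.
Qed.

Lemma dpsi_diag : dpsi d x (S (S m)) (S (S m)) = ddiag d p q r.
Proof.
  apply (dpsi_chain _ _ _ _ (fun t => ratio p t r)); [exact Hd | | now apply is_derive_ratio_2].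
  intros t. rewrite psi_SS, upd_eq, !upd_neq by lia. reflexivity.
Qed.

Lemma dpsi_next : dpsi d x (S (S m)) (S (S (S m))) = dnext d p q r.
Proof.
  apply (dpsi_chain _ _ _ _ (fun t => ratio p q t)); [exact Hd | | now apply is_derive_ratio_3].
  intros t. rewrite psi_SS, upd_eq, !upd_neq by lia. reflexivity.
Qed.

Lemma Dpsi_SS y : Dpsi d x y (S (S m)) =
  dprev d p q r * y (S m) + ddiag d p q r * y (S (S m)) + dnext d p q r * y (S (S (S m))).
Proof.
  unfold Dpsi. simpl Nat.leb. replace (S (S m) - 1)%nat with (S m) by lia.
  rewrite dpsi_prev, dpsi_diag, dpsi_next. reflexivity.
Qed.
End Partials.

Lemma Dpsi_1 d x y : (1 <= d)%nat -> 0 <= x 1%nat ->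
  Dpsi d x y 1 = d11 d (x 1%nat) (x 2%nat) * y 1%nat + d12 d (x 1%nat) (x 2%nat) * y 2%nat.
Proof. intros. unfold Dpsi. rewrite dpsi_1_1, dpsi_1_2 by auto. simpl. ring. Qed.

Lemma dpow_le d g g' : 0 <= g <= g' -> 0 <= dpow d g <= dpow d g'.
Proof.
  intros Hg. unfold dpow. pose proof (pos_INR d). split.
  - apply Rmult_le_pos; [lra | apply pow_le; lra].
  - apply Rmult_le_compat_l; [lra | apply pow_incr; lra].
Qed.

Lemma dpow_mult_le d g g' w w' : 0 <= g <= g' -> 0 <= w <= w' ->
  0 <= dpow d g * w <= dpow d g' * w'.
Proof.
  intros Hg Hw. pose proof (dpow_le d g g' Hg). split.
  - apply Rmult_le_pos; lra.
  - apply Rmult_le_compat; lra.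
Qed.

Lemma Rdiv_le_compat_nonneg a b c e : 0 <= a <= c -> 0 < e <= b -> 0 <= a / b <= c / e.
Proof.
  intros. split.
  - apply Rdiv_le_0_compat; lra.
  - unfold Rdiv. apply Rmult_le_compat; try lra.
    + left; apply Rinv_0_lt_compat; lra.
    + apply Rinv_le_contravar; lra.
Qed.

Lemma ell_le u v u' v' : 0 <= u <= u' -> 0 <= v <= v' -> ell u v <= ell u' v'.
Proof. intros. unfold ell. nra. Qed.

Definition d11_ub (d : nat) (l1 l2 u2 : R) : R :=
  dpow d (ratio1 l1 u2) * ((1 - l2) / (1 + 2 * l1) ^ 2).
Definition d12_ub (d : nat) (l1 u1 u2 : R) : R :=
  dpow d (ratio1 l1 u2) * (u1 / (1 + 2 * u1)).

Section FirstRowBounds.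
Variables (d : nat) (l1 u1 l2 u2 x1 x2 : R).
Hypotheses (Hl1 : 0 <= l1) (Hx1 : l1 <= x1 <= u1) (Hl2 : 0 <= l2) (Hx2 : l2 <= x2 <= u2)
  (Hu2 : u2 <= 1).

(* [ratio1] decreases in [x1] because [x2 <= 1]. *)
Lemma ratio1_le : 0 <= ratio1 x1 x2 <= ratio1 l1 u2.
Proof.
  unfold ratio1, ell. split; [apply Rdiv_le_0_compat; nra|].
  apply Rmult_le_reg_r with ((1 + 2 * x1) * (1 + 2 * l1)); [nra|].
  field_simplify; [|lra|lra].
  assert (0 <= x1 * l1 * (u2 - x2)) by (apply Rmult_le_pos; nra).
  nra.
Qed.

Lemma d11_abs_le : Rabs (d11 d x1 x2) <= d11_ub d l1 l2 u2.
Proof.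
  assert (H : 0 <= dpow d (ratio1 x1 x2) * ((1 - x2) / (1 + 2 * x1) ^ 2) <= d11_ub d l1 l2 u2).
  { apply dpow_mult_le; [apply ratio1_le|].
    apply Rdiv_le_compat_nonneg; [lra|]. split; [apply pow_lt|apply pow_incr]; lra. }
  replace (d11 d x1 x2) with (- (dpow d (ratio1 x1 x2) * ((1 - x2) / (1 + 2 * x1) ^ 2)))
    by (unfold d11, Rdiv; ring).
  rewrite Rabs_Ropp, Rabs_pos_eq; lra.
Qed.

Lemma d12_le : 0 <= d12 d x1 x2 <= d12_ub d l1 u1 u2.
Proof.
  apply dpow_mult_le; [apply ratio1_le|]. split; [apply Rdiv_le_0_compat; lra|].
  apply Rmult_le_reg_r with ((1 + 2 * x1) * (1 + 2 * u1)); [nra|].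
  field_simplify; nra.
Qed.
End FirstRowBounds.

Definition ratio_ub (lp up lq uq ur : R) : R := up * (ell uq ur / ell lp lq).
Definition dprev_ub (d : nat) (lp up lq uq ur : R) : R :=
  dpow d (ratio_ub lp up lq uq ur) * (ell uq ur / ell lp lq ^ 2).
Definition ddiag_ub (d : nat) (lp up lq uq ur : R) : R :=
  dpow d (ratio_ub lp up lq uq ur) * (up * (1 + ur + up * ur) / ell lp lq ^ 2).
Definition dnext_ub (d : nat) (lp up lq uq ur : R) : R :=
  dpow d (ratio_ub lp up lq uq ur) * (up * uq / ell lp lq).

Section RowBounds.
Variables (d : nat) (lp up lq uq lr ur p q r : R).
Hypotheses (Hlp : 0 <= lp) (Hp : lp <= p <= up) (Hlq : 0 <= lq) (Hq : lq <= q <= uq)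
  (Hlr : 0 <= lr) (Hr : lr <= r <= ur).

Let ell_qr : 0 <= ell q r <= ell uq ur.
Proof. pose proof (ell_pos q r). pose proof (ell_le q r uq ur). lra. Qed.

Let ell_pq : 0 < ell lp lq <= ell p q.
Proof. split; [apply ell_pos | apply ell_le]; lra. Qed.

Let ell_pq2 : 0 < ell lp lq ^ 2 <= ell p q ^ 2.
Proof. split; [apply pow_lt | apply pow_incr]; lra. Qed.

Let ratio_le : 0 <= ratio p q r <= ratio_ub lp up lq uq ur.
Proof.
  pose proof (Rdiv_le_compat_nonneg _ _ _ _ ell_qr ell_pq). unfold ratio, ratio_ub.
  split; [apply Rmult_le_pos | apply Rmult_le_compat]; lra.
Qed.

Lemma dprev_le : 0 <= dprev d p q r <= dprev_ub d lp up lq uq ur.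
Proof. apply dpow_mult_le; [exact ratio_le | now apply Rdiv_le_compat_nonneg]. Qed.

Lemma ddiag_le : 0 <= ddiag d p q r <= ddiag_ub d lp up lq uq ur.
Proof.
  apply dpow_mult_le; [exact ratio_le | apply Rdiv_le_compat_nonneg; [|exact ell_pq2]].
  split; [apply Rmult_le_pos|apply Rmult_le_compat]; nra.
Qed.

Lemma dnext_le : 0 <= dnext d p q r <= dnext_ub d lp up lq uq ur.
Proof.
  apply dpow_mult_le; [exact ratio_le | apply Rdiv_le_compat_nonneg; [|exact ell_pq]].
  split; [apply Rmult_le_pos|apply Rmult_le_compat]; lra.
Qed.
End RowBounds.

Definition bounded_on_box (f : R -> R -> R -> R) (V l1 u1 l2 u2 l3 u3 : R) : Prop :=
  forall x1 x2 x3, l1 <= x1 <= u1 -> l2 <= x2 <= u2 -> l3 <= x3 <= u3 -> f x1 x2 x3 <= V.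

Lemma bounded_on_box_split1 {f V l1 u1 l2 u2 l3 u3} m :
  bounded_on_box f V l1 m l2 u2 l3 u3 -> bounded_on_box f V m u1 l2 u2 l3 u3 ->
  bounded_on_box f V l1 u1 l2 u2 l3 u3.
Proof. intros A B x1 x2 x3 ? ? ?. destruct (Rle_dec x1 m); [apply A | apply B]; lra. Qed.

Lemma bounded_on_box_split2 {f V l1 u1 l2 u2 l3 u3} m :
  bounded_on_box f V l1 u1 l2 m l3 u3 -> bounded_on_box f V l1 u1 m u2 l3 u3 ->
  bounded_on_box f V l1 u1 l2 u2 l3 u3.
Proof. intros A B x1 x2 x3 ? ? ?. destruct (Rle_dec x2 m); [apply A | apply B]; lra. Qed.

Section BoxLeaves.
Variables (d : nat) (V l1 u1 l2 u2 l3 u3 : R).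
Hypotheses (Hl1 : 0 <= l1) (Hl2 : 0 <= l2) (Hl3 : 0 <= l3) (Hu2 : u2 <= 1).

Lemma bounded_row1_sum : d11_ub d l1 l2 u2 + d12_ub d l1 u1 u2 <= V ->
  bounded_on_box (fun x1 x2 _ => Rabs (d11 d x1 x2) + d12 d x1 x2) V l1 u1 l2 u2 l3 u3.
Proof.
  intros HV x1 x2 x3 ? ? ?.
  pose proof (d11_abs_le d l1 u1 l2 u2 x1 x2). pose proof (d12_le d l1 u1 l2 u2 x1 x2). lra.
Qed.

Lemma bounded_row_sum :
  dprev_ub d l1 u1 l2 u2 u3 + ddiag_ub d l1 u1 l2 u2 u3 + dnext_ub d l1 u1 l2 u2 u3 <= V ->
  bounded_on_box (fun p q r => dprev d p q r + ddiag d p q r + dnext d p q r)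
    V l1 u1 l2 u2 l3 u3.
Proof.
  intros HV p q r ? ? ?. pose proof (dprev_le d l1 u1 l2 u2 l3 u3 p q r).
  pose proof (ddiag_le d l1 u1 l2 u2 l3 u3 p q r). pose proof (dnext_le d l1 u1 l2 u2 l3 u3 p q r).
  lra.
Qed.

Lemma bounded_y1_coeff : d11_ub d l1 l2 u2 + dprev_ub d l1 u1 l2 u2 u3 <= V ->
  bounded_on_box (fun x1 x2 x3 => Rabs (d11 d x1 x2) + dprev d x1 x2 x3) V l1 u1 l2 u2 l3 u3.
Proof.
  intros HV x1 x2 x3 ? ? ?.
  pose proof (d11_abs_le d l1 u1 l2 u2 x1 x2). pose proof (dprev_le d l1 u1 l2 u2 l3 u3 x1 x2 x3).
  lra.
Qed.

Lemma bounded_tail_coeff :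
  d12_ub d l1 u1 u2 + ddiag_ub d l1 u1 l2 u2 u3 + dnext_ub d l1 u1 l2 u2 u3 <= V ->
  bounded_on_box (fun x1 x2 x3 => d12 d x1 x2 + ddiag d x1 x2 x3 + dnext d x1 x2 x3)
    V l1 u1 l2 u2 l3 u3.
Proof.
  intros HV x1 x2 x3 ? ? ?. pose proof (d12_le d l1 u1 l2 u2 x1 x2).
  pose proof (ddiag_le d l1 u1 l2 u2 l3 u3 x1 x2 x3).
  pose proof (dnext_le d l1 u1 l2 u2 l3 u3 x1 x2 x3). lra.
Qed.

Lemma bounded_d12 : d12_ub d l1 u1 u2 <= V ->
  bounded_on_box (fun x1 x2 _ => d12 d x1 x2) V l1 u1 l2 u2 l3 u3.
Proof. intros HV x1 x2 x3 ? ? ?. pose proof (d12_le d l1 u1 l2 u2 x1 x2). lra. Qed.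
End BoxLeaves.

Lemma sup_from_ub k y i : (k <= i)%nat -> Rbar_le (Rabs (y i)) (sup_from k y).
Proof. intros Hi. apply (proj1 (Lub_Rbar_correct _)). now exists i. Qed.

Lemma sup_from_le k y M : (forall i, (k <= i)%nat -> Rabs (y i) <= M) ->
  Rbar_le (sup_from k y) M.
Proof. intros H. apply (proj2 (Lub_Rbar_correct _)). intros v [i [Hi ->]]. now apply H. Qed.

Lemma sup_norm_eq1 y : sup_from 1 y = Finite 1 -> forall i, (1 <= i)%nat -> Rabs (y i) <= 1.
Proof. intros Hy i Hi. pose proof (sup_from_ub 1 y i Hi) as H. now rewrite Hy in H. Qed.

Lemma weighted_norm_eq1 y : Rbar_plus (Rabs (y 1%nat)) (sup_from 2 y) = Finite 1 ->
  exists s, Rabs (y 1%nat) + s = 1 /\ forall i, (2 <= i)%nat -> Rabs (y i) <= s.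
Proof.
  intros Hy. destruct (sup_from 2 y) as [s| |] eqn:Es; try discriminate.
  exists s. split; [now injection Hy|]. intros i Hi.
  pose proof (sup_from_ub 2 y i Hi) as H. now rewrite Es in H.
Qed.

Lemma weighted_norm_le z V : (forall i, (2 <= i)%nat -> Rabs (z 1%nat) + Rabs (z i) <= V) ->
  Rbar_le (Rbar_plus (Rabs (z 1%nat)) (sup_from 2 z)) V.
Proof.
  intros H. assert (Hs : Rbar_le (sup_from 2 z) (V - Rabs (z 1%nat))).
  { apply sup_from_le. intros i Hi. specialize (H i Hi). lra. }
  destruct (sup_from 2 z) as [s| |]; simpl in *; lra.
Qed.

Section NormEstimates.
Variables (d : nat) (a b c : R) (x : nat -> R).
Hypotheses (Hd : (1 <= d)%nat) (Ha : 0 <= a) (Hc : c <= 1)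
  (Hx1 : a <= x 1%nat <= b) (Hxn : forall n, (2 <= n)%nat -> 0 <= x n <= c).

Let x_nonneg n : (1 <= n)%nat -> 0 <= x n.
Proof. intros Hn. destruct (Nat.eq_dec n 1) as [->|]; [lra|]. apply Hxn. lia. Qed.

Let row_nonneg m : 0 <= dprev d (x (S m)) (x (S (S m))) (x (S (S (S m))))
  /\ 0 <= ddiag d (x (S m)) (x (S (S m))) (x (S (S (S m))))
  /\ 0 <= dnext d (x (S m)) (x (S (S m))) (x (S (S (S m)))).
Proof.
  set (p := x (S m)); set (q := x (S (S m))); set (r := x (S (S (S m)))).
  assert (0 <= p /\ 0 <= q /\ 0 <= r) as (? & ? & ?) by (repeat split; apply x_nonneg; lia).
  split; [|split]; [apply (dprev_le d p p q q r r) | apply (ddiag_le d p p q q r r)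
    | apply (dnext_le d p p q q r r)]; lra.
Qed.

Let d12_nonneg : 0 <= d12 d (x 1%nat) (x 2%nat).
Proof.
  pose proof (Hxn 2%nat (le_n 2)).
  apply (d12_le d (x 1%nat) (x 1%nat) (x 2%nat) (x 2%nat)); lra.
Qed.

Lemma Dpsi_1_abs_le y : Rabs (Dpsi d x y 1) <=
  Rabs (d11 d (x 1%nat) (x 2%nat)) * Rabs (y 1%nat) + d12 d (x 1%nat) (x 2%nat) * Rabs (y 2%nat).
Proof.
  rewrite Dpsi_1 by (auto; lra).
  eapply Rle_trans; [apply Rabs_triang|].
  rewrite !Rabs_mult, (Rabs_pos_eq (d12 _ _ _)) by lra. apply Rle_refl.
Qed.

Lemma Dpsi_SS_abs_le y m : Rabs (Dpsi d x y (S (S m))) <=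
  dprev d (x (S m)) (x (S (S m))) (x (S (S (S m)))) * Rabs (y (S m))
  + ddiag d (x (S m)) (x (S (S m))) (x (S (S (S m)))) * Rabs (y (S (S m)))
  + dnext d (x (S m)) (x (S (S m))) (x (S (S (S m)))) * Rabs (y (S (S (S m)))).
Proof.
  destruct (row_nonneg m) as (? & ? & ?).
  rewrite Dpsi_SS by (auto; apply x_nonneg; lia).
  eapply Rle_trans; [apply Rabs_triang|]. eapply Rle_trans; [apply Rplus_le_compat_r, Rabs_triang|].
  rewrite !Rabs_mult, (Rabs_pos_eq (dprev _ _ _ _)), (Rabs_pos_eq (ddiag _ _ _ _)),
    (Rabs_pos_eq (dnext _ _ _ _)) by lra.
  apply Rle_refl.
Qed.

Let row := fun p q r => dprev d p q r + ddiag d p q r + dnext d p q r.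

Lemma sup_norm_Dpsi_le V :
  bounded_on_box (fun x1 x2 _ => Rabs (d11 d x1 x2) + d12 d x1 x2) V a b 0 c 0 0 ->
  bounded_on_box row V a b 0 c 0 c -> bounded_on_box row V 0 c 0 c 0 c ->
  forall y, sup_from 1 y = Finite 1 -> Rbar_le (sup_from 1 (Dpsi d x y)) V.
Proof.
  intros B1 B2 B3 y Hy. pose proof (sup_norm_eq1 y Hy) as Hy1.
  apply sup_from_le. intros [|[|m]] Hi; [lia| |].
  - pose proof (Hxn 2%nat (le_n 2)). pose proof (Hy1 1%nat (le_n 1)).
    pose proof (Hy1 2%nat ltac:(lia)). pose proof (Dpsi_1_abs_le y). pose proof d12_nonneg.
    pose proof (B1 (x 1%nat) (x 2%nat) 0 Hx1 ltac:(lra) ltac:(lra)) as F1. cbv beta in F1.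
    pose proof (Rabs_pos (d11 d (x 1%nat) (x 2%nat))). nra.
  - assert (Hrow : row (x (S m)) (x (S (S m))) (x (S (S (S m)))) <= V).
    { destruct m as [|m]; [apply B2; [exact Hx1|..] | apply B3]; apply Hxn; lia. }
    destruct (row_nonneg m) as (? & ? & ?). pose proof (Dpsi_SS_abs_le y m).
    pose proof (Hy1 (S m) ltac:(lia)). pose proof (Hy1 (S (S m)) ltac:(lia)).
    pose proof (Hy1 (S (S (S m))) ltac:(lia)). unfold row in *. nra.
Qed.

Lemma weighted_norm_Dpsi_le V M V2 : M + V2 <= V ->
  bounded_on_box (fun x1 x2 x3 => Rabs (d11 d x1 x2) + dprev d x1 x2 x3) V a b 0 c 0 c ->
  bounded_on_box (fun x1 x2 x3 => d12 d x1 x2 + ddiag d x1 x2 x3 + dnext d x1 x2 x3)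
    V a b 0 c 0 c ->
  bounded_on_box (fun x1 x2 _ => d12 d x1 x2) M a b 0 c 0 0 ->
  bounded_on_box row V2 0 c 0 c 0 c ->
  forall y, Rbar_plus (Rabs (y 1%nat)) (sup_from 2 y) = Finite 1 ->
  Rbar_le (Rbar_plus (Rabs (Dpsi d x y 1)) (sup_from 2 (Dpsi d x y))) V.
Proof.
  intros HMV B1 B2 B3 B4 y Hy.
  destruct (weighted_norm_eq1 y Hy) as (s & Hus & Hys).
  pose proof (Rabs_pos (y 1%nat)). pose proof (Rabs_pos (y 2%nat)). pose proof (Hys 2%nat (le_n 2)).
  pose proof (Hxn 2%nat (le_n 2)). pose proof (Hxn 3%nat ltac:(lia)). pose proof d12_nonneg.
  pose proof (Dpsi_1_abs_le y) as D1. pose proof (Dpsi_SS_abs_le y 0) as D2.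
  destruct (row_nonneg 0) as (? & ? & ?).
  set (x1 := x 1%nat) in *; set (x2 := x 2%nat) in *; set (x3 := x 3%nat) in *.
  pose proof (B1 x1 x2 x3 Hx1 ltac:(lra) ltac:(lra)) as F1.
  pose proof (B2 x1 x2 x3 Hx1 ltac:(lra) ltac:(lra)) as F2.
  pose proof (B3 x1 x2 0 Hx1 ltac:(lra) ltac:(lra)) as F3.
  cbv beta in F1, F2, F3.
  assert (Hrow1 : Rabs (Dpsi d x y 1) <= Rabs (d11 d x1 x2) * Rabs (y 1%nat) + d12 d x1 x2 * s).
  { assert (d12 d x1 x2 * Rabs (y 2%nat) <= d12 d x1 x2 * s) by (apply Rmult_le_compat_l; lra).
    lra. }
  apply weighted_norm_le. intros [|[|[|m]]] Hi; try lia.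
  - pose proof (Hys 3%nat ltac:(lia)). nra.
  (* Rows i >= 3 see only tail coordinates: |y_1| carries |d11| <= V and s carries M + V2. *)
  - pose proof (B4 (x (S (S m))) (x (S (S (S m)))) (x (S (S (S (S m)))))
      ltac:(apply Hxn; lia) ltac:(apply Hxn; lia) ltac:(apply Hxn; lia)).
    destruct (row_nonneg (S m)) as (? & ? & ?). pose proof (Dpsi_SS_abs_le y (S m)).
    pose proof (Hys (S (S m)) ltac:(lia)). pose proof (Hys (S (S (S m))) ltac:(lia)).
    pose proof (Hys (S (S (S (S m)))) ltac:(lia)). unfold row in *. nra.
Qed.
End NormEstimates.

Ltac box_leaf :=
  first [ apply bounded_row1_sum | apply bounded_row_sum | apply bounded_y1_coeff
        | apply bounded_tail_coeff | apply bounded_d12 ];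
  first [ lra
        | unfold d11_ub, d12_ub, dprev_ub, ddiag_ub, dnext_ub, ratio_ub, ratio1, dpow, ell;
          simpl Nat.sub; simpl INR; simpl pow; lra ].

Ltac split1_mid := lazymatch goal with |- bounded_on_box _ _ ?l ?u _ _ _ _ =>
  apply (bounded_on_box_split1 ((l + u) / 2)) end.
Ltac split2_mid := lazymatch goal with |- bounded_on_box _ _ _ _ ?l ?u _ _ =>
  apply (bounded_on_box_split2 ((l + u) / 2)) end.

Tactic Notation "bisect_box" int_or_var(n1) int_or_var(n2) :=
  do n1 split1_mid; do n2 split2_mid; box_leaf.

Definition Dpsi_norm_bound (d : nat) (a b c V : R) : Prop :=
  forall x, a <= x 1%nat <= b -> (forall n, (2 <= n)%nat -> 0 <= x n <= c) ->
  forall y, seqnorm d y = Finite 1 -> Rbar_le (seqnorm d (Dpsi d x y)) V.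

Lemma Dpsi_norm_bound_2 : Dpsi_norm_bound 2 (5/10) (7/10) (27/100) (989/1000).
Proof.
  intros x Hx1 Hxn.
  apply (sup_norm_Dpsi_le 2 (5/10) (7/10) (27/100)); auto; try lra.
  - box_leaf.
  - bisect_box 2 1.
  - bisect_box 1 0.
Qed.

Lemma Dpsi_norm_bound_3 : Dpsi_norm_bound 3 (4/10) (6/10) (2/10) (989/1000).
Proof.
  intros x Hx1 Hxn.
  apply (weighted_norm_Dpsi_le 3 (4/10) (6/10) (2/10) x) with (M := 277/500) (V2 := 87/200);
    auto; try lia; try lra; [bisect_box 1 1 | box_leaf ..].
Qed.

Lemma Dpsi_norm_bound_4 : Dpsi_norm_bound 4 (3/10) (5/10) (1/10) (989/1000).
Proof.
  intros x Hx1 Hxn.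
  apply (weighted_norm_Dpsi_le 4 (3/10) (5/10) (1/10) x) with (M := 23/40) (V2 := 207/500);
    auto; try lia; try lra; [bisect_box 1 1 | box_leaf ..].
Qed.

Lemma Dpsi_norm_bound_5 : Dpsi_norm_bound 5 (3/10) (4/10) (1/10) (989/1000).
Proof.
  intros x Hx1 Hxn.
  apply (weighted_norm_Dpsi_le 5 (3/10) (4/10) (1/10) x) with (M := 531/1000) (V2 := 229/500);
    auto; try lia; try lra; box_leaf.
Qed.

Lemma Dpsi_norm_bound_6 : Dpsi_norm_bound 6 (27/100) (32/100) (1/10) (989/1000).
Proof.
  intros x Hx1 Hxn.
  apply (weighted_norm_Dpsi_le 6 (27/100) (32/100) (1/10) x) with (M := 497/1000) (V2 := 123/250);
    auto; try lia; try lra; [bisect_box 0 3 | box_leaf ..].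
Qed.

Lemma Dpsi_norm_bound_7 : Dpsi_norm_bound 7 (26/100) (27/100) (1/100) (989/1000).
Proof.
  intros x Hx1 Hxn.
  apply (weighted_norm_Dpsi_le 7 (26/100) (27/100) (1/100) x) with (M := 101/250) (V2 := 117/200);
    auto; try lia; try lra; [bisect_box 0 2 | box_leaf ..].
Qed.

Theorem proposition2p9 :
  forall d : nat, (2 <= d <= 7)%nat ->
  forall x : nat -> R,
    in_S (fst (fst (abc d))) (snd (fst (abc d))) (snd (abc d)) x ->
    exists r : R, r < 99/100 /\
      forall y : nat -> R, seqnorm d y = Finite 1 ->
        Rbar_le (seqnorm d (Dpsi d x y)) (Finite r).
Proof.
  intros d Hd x [_ [Hx1 Hxn]]. exists (989/1000). split; [lra|]. revert x Hx1 Hxn.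
  assert (Hcases : d = 2%nat \/ d = 3%nat \/ d = 4%nat \/ d = 5%nat \/ d = 6%nat \/ d = 7%nat)
    by lia.
  destruct Hcases as [-> | [-> | [-> | [-> | [-> | ->]]]]];
    [ exact Dpsi_norm_bound_2 | exact Dpsi_norm_bound_3 | exact Dpsi_norm_bound_4
    | exact Dpsi_norm_bound_5 | exact Dpsi_norm_bound_6 | exact Dpsi_norm_bound_7 ].
Qed.
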